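(* Let $f\in\mathbb{R}[x,y]$ be a polynomial of degree $n$ with homogeneous decomposition $f=\sum_{i=0}^n f_i$, and let $\mathrm{II}_f=f_{xx}dx^2+2f_{xy}\,dx\,dy+f_{yy}dy^2$. Let $\varrho:\mathbb{R}^3\setminus\{\omega=0\}\to\mathbb{R}^2$, $\varrho(u,v,\omega)=(u/\omega,v/\omega)$. Set $F(u,v,\omega)=\sum_{i=0}^n\omega^{n-i}f_i(u,v)$ and $A=-uF_{uu}-vF_{uv}$, $B=-uF_{uv}-vF_{vv}$, $S=u^2F_{uu}+2uvF_{uv}+v^2F_{vv}$ (all evaluated at $(u,v,\omega)$), and let $Q$ be the quadratic differential form on $\mathbb{R}^3$ $$Q=\omega^2F_{uu}\,du^2+2\omega^2F_{uv}\,du\,dv+\omega^2F_{vv}\,dv^2+2\omega A\,du\,d\omega+2\omega B\,dv\,d\omega+S\,d\omega^2 .$$ Then on $\mathbb{R}^3\setminus\{\omega=0\}$ one has $Q=\omega^{n+2}\varrho^*(\mathrm{II}_f)$. Consequently the restriction of $Q$ to the unit sphere $\mathbb{S}^2=\{u^2+v^2+\omega^2=1\}$ is an analytic quadratic differential form on $\mathbb{S}^2$ which, on each open hemisphere $\{\omega>0\}$ and $\{\omega<0\}$, is a nonvanishing multiple of the form induced from $\mathrm{II}_f$ by the Poincaré projections (so it extends these induced forms to the whole sphere), and the equator $\{\omega=0\}\cap\mathbb{S}^2$ is an integral curve of the fields of lines defined on $\mathbb{S}^2$ by this form.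
   Context: The Poincaré projections are $s_{1,2}:\mathbb{R}^2\to\mathbb{S}^2$, $s_{1}(x,y)=(x,y,1)/\sqrt{1+x^2+y^2}$, $s_2=-s_1$; their inverses on the open upper and lower hemispheres are the restrictions of $\varrho$. The induced forms are $(s_i^{-1})^*\mathrm{II}_f$ on the respective open hemispheres. The fields of lines defined by a quadratic differential form $Q$ on $\mathbb{S}^2$ assign to a point $p$ the directions $\xi\in T_p\mathbb{S}^2$ with $Q_p(\xi,\xi)=0$; the solutions of $\mathrm{II}_f=0$ in the plane are the (projected) fields of asymptotic directions of the graph of $f$. *)

From mathcomp Require Import all_boot all_order all_algebra.
From mathcomp Require Import mpoly.
Set Implicit Arguments. Unset Strict Implicit. Unset Printing Implicit Defensive.
Import GRing.Theory Num.Theory.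
Local Open Scope ring_scope.

Definition ix : 'I_2 := @Ordinal 2 0 isT.
Definition iy : 'I_2 := @Ordinal 2 1 isT.
Definition iu : 'I_3 := @Ordinal 3 0 isT.
Definition iv : 'I_3 := @Ordinal 3 1 isT.
Definition iw : 'I_3 := @Ordinal 3 2 isT.

Section Defs.
Variable R : realFieldType.

Definition pt2 (x y : R) : 'I_2 -> R := fun k => nth 0 [:: x; y] k.
Definition pt3 (u v w : R) : 'I_3 -> R := fun k => nth 0 [:: u; v; w] k.

Definition hcomp (f : {mpoly R[2]}) (i : nat) : {mpoly R[2]} :=
  pihomog mdeg i f.

(* the polynomial g(x,y) viewed as the polynomial g(u,v) in R[u,v,omega] *)
Definition lift23 (g : {mpoly R[2]}) : {mpoly R[3]} :=
  mmap (fun c : R => c%:MP) (fun j : 'I_2 => 'X_(widen_ord (leqnSn 2) j)) g.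

Definition homogF (n : nat) (f : {mpoly R[2]}) : {mpoly R[3]} :=
  \sum_(i < n.+1) 'X_iw ^+ (n - i) * lift23 (hcomp f i).

Definition d2 {k : nat} (p : {mpoly R[k]}) (i j : 'I_k) : {mpoly R[k]} :=
  mderiv i (mderiv j p).

Definition IImx (f : {mpoly R[2]}) (x y : R) : 'M[R]_2 :=
  \matrix_(i < 2, j < 2) (d2 f i j).@[pt2 x y].

Definition Qpoly (n : nat) (f : {mpoly R[2]}) : 'M[{mpoly R[3]}]_3 :=
  let F := homogF n f in
  let U := 'X_iu in let V := 'X_iv in let W := 'X_iw in
  let Fuu := d2 F iu iu in let Fuv := d2 F iu iv in let Fvv := d2 F iv iv in
  let A := - (U * Fuu) - V * Fuv in
  let B := - (U * Fuv) - V * Fvv in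
  let S := U ^+ 2 * Fuu + 2%:R * U * V * Fuv + V ^+ 2 * Fvv in
  \matrix_(i < 3, j < 3)
    match nat_of_ord i, nat_of_ord j with
    | 0, 0 => W ^+ 2 * Fuu
    | 0, 1 | 1, 0 => W ^+ 2 * Fuv
    | 1, 1 => W ^+ 2 * Fvv
    | 0, 2 | 2, 0 => W * A
    | 1, 2 | 2, 1 => W * B
    | _, _ => S
    end.

Definition Qat (n : nat) (f : {mpoly R[2]}) (u v w : R) : 'M[R]_3 :=
  map_mx (meval (pt3 u v w)) (Qpoly n f).

Definition rho (u v w : R) : R * R := (u / w, v / w).

Definition Jrho (u v w : R) : 'M[R]_(2, 3) :=
  \matrix_(i < 2, j < 3)
    match nat_of_ord i, nat_of_ord j with
    | 0, 0 => w^-1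
    | 0, 2 => - (u / w ^+ 2)
    | 1, 1 => w^-1
    | 1, 2 => - (v / w ^+ 2)
    | _, _ => 0
    end.

Definition pullbackII (f : {mpoly R[2]}) (u v w : R) : 'M[R]_3 :=
  (Jrho u v w)^T *m IImx f (rho u v w).1 (rho u v w).2 *m Jrho u v w.

Definition bform {k : nat} (M : 'M[R]_k) (xi eta : 'cV[R]_k) : R :=
  (xi^T *m M *m eta) 0 0.

Definition onS2 (u v w : R) : Prop := u ^+ 2 + v ^+ 2 + w ^+ 2 = 1.

Definition tangentS2 (u v w : R) (xi : 'cV[R]_3) : Prop :=
  u * xi iu 0 + v * xi iv 0 + w * xi iw 0 = 0.

Definition equator_tangent (u v : R) : 'cV[R]_3 :=
  \col_(i < 3) match nat_of_ord i with 0 => - v | 1 => u | _ => 0 end.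

End Defs.

(* Since f_i is homogeneous of degree i, its second derivatives are homogeneous
   of degree i - 2; hence for a, b in {u, v} and omega <> 0,
     F_ab(u, v, omega) = sum_i omega^(n-i) (f_i)_ab(u, v)
                       = omega^(n-2) f_ab(u/omega, v/omega).
   Substituting this into Q and comparing entry by entry with J^T II_f J,
   J the Jacobian of rho, gives Q = omega^(n+2) rho^* II_f, whence the claim on
   the hemispheres with factor omega^(n+2). At omega = 0 every coefficient of Q
   except S carries a factor omega, and the tangent (-v, u, 0) of the equator
   has no d omega component, so it is isotropic for Q. *)

From HB Require Import structures.
From mathcomp Require Import all_boot all_order all_algebra.
From mathcomp Require Import mpoly.
From mathcomp Require Import ring.
Set Implicit Arguments. Unset Strict Implicit. Unset Printing Implicit Defensive.
Import GRing.Theory Num.Theory.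
Local Open Scope ring_scope.

Section HomogeneousPolynomials.
Variables (k : nat) (R : comRingType).
Implicit Types (p : {mpoly R[k]}) (d : nat).

Lemma meval_scale_dhomog d p (c : R) (x : 'I_k -> R) :
  p \is d.-homog -> p.@[fun i => c * x i] = c ^+ d * p.@[x].
Proof.
move=> /dhomogP hom_p; rewrite !mevalE mulr_sumr big_seq [RHS]big_seq.
apply: eq_bigr => m /hom_p <-; rewrite mulrCA; congr (_ * _).
by rewrite /= mdegE -prodrXr -big_split; apply: eq_bigr => i _; rewrite exprMn.
Qed.

Lemma mderiv_dhomog d p (i : 'I_k) :
  p \is d.-homog -> p^`M(i) \is d.-1.-homog.
Proof.
move=> /dhomogP hom_p; apply/dhomogP => m.
rewrite mcoeff_msupp mcoeff_mderiv => /eqP nz.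
have : (m + U_(i))%MM \in msupp p.
  by rewrite mcoeff_msupp; apply: contra_not_neq nz => ->; rewrite mul0rn.
by move=> /hom_p <-; rewrite /= mdegD mdeg1 addn1.
Qed.

Lemma mderiv_dhomog0 p (i : 'I_k) : p \is 0.-homog -> p^`M(i) = 0.
Proof.
move=> hom_p; apply/mpolyP => m; rewrite mcoeff_mderiv mcoeff0.
by rewrite (dhomog_nemf_coeff hom_p) ?mul0rn //= mdegD mdeg1 addn1.
Qed.

Lemma mderivXn (i j : 'I_k) (p : nat) :
  ('X_j ^+ p : {mpoly R[k]})^`M(i) = ((i == j) * p)%:R *: 'X_j ^+ p.-1.
Proof.
elim: p => [|p IHp]; first by rewrite muln0 scale0r expr0 -mpolyC1 mderivC.
rewrite exprS mderivM IHp mderivX mnm1E.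
have [<-|_] := eqVneq i j; last by rewrite !mul0n !scale0r mulr0 mul0r addr0.
have -> : (U_(i) - U_(i) = 0 :> 'X_{1..k})%MM.
  by apply/mnmP => l; rewrite mnmBE subnn mnm0E.
rewrite mpolyX0 scale1r mul1r !mul1n.
case: p {IHp} => [|p]; first by rewrite scale0r mulr0 addr0 scale1r.
by rewrite -scalerAr -exprS [p.+2%:R]mulrS scalerDl scale1r.
Qed.
End HomogeneousPolynomials.

(* Stated with c ^+ 2 on the left so that it also holds for d < 2, where both
   sides vanish. *)
Lemma meval_d2_scale_dhomog (R : realFieldType) (k d : nat) (p : {mpoly R[k]})
    (i j : 'I_k) (c : R) (x : 'I_k -> R) :
  p \is d.-homog ->
  c ^+ 2 * (d2 p i j).@[fun l => c * x l] = c ^+ d * (d2 p i j).@[x].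
Proof.
rewrite /d2; case: d => [|[|d]] hom_p.
- by rewrite (mderiv_dhomog0 j hom_p) mderiv0 !meval0 !mulr0.
- by rewrite (mderiv_dhomog0 i (mderiv_dhomog j hom_p)) !meval0 !mulr0.
- rewrite (meval_scale_dhomog _ _ (mderiv_dhomog i (mderiv_dhomog j hom_p))).
  by rewrite mulrA -exprD.
Qed.

Lemma ord2P (a : 'I_2) : a = ix \/ a = iy.
Proof. by case: a => [[|[|//]] ?]; [left | right]; apply: val_inj. Qed.

Lemma ord3P (i : 'I_3) : [\/ i = iu, i = iv | i = iw].
Proof.
case: i => [[|[|[|//]]] ?]; [constructor 1 | constructor 2 | constructor 3];
  exact: val_inj.
Qed.

Lemma big_ord2_xy (V : nmodType) (F : 'I_2 -> V) : \sum_i F i = F ix + F iy.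
Proof.
by rewrite !big_ord_recr big_ord0 /= add0r; congr (F _ + F _); apply: val_inj.
Qed.

Lemma big_ord3_uvw (V : nmodType) (F : 'I_3 -> V) :
  \sum_i F i = F iu + F iv + F iw.
Proof.
rewrite !big_ord_recr big_ord0 /= add0r.
by congr (F _ + F _ + F _); apply: val_inj.
Qed.

Section PlaneToSpace.
Variable R : realFieldType.
Implicit Types (f g : {mpoly R[2]}) (u v w : R).

Local Notation widen3 j := (widen_ord (leqnSn 2) j).

Lemma widen3_ix : widen3 ix = iu. Proof. exact: val_inj. Qed.
Lemma widen3_iy : widen3 iy = iv. Proof. exact: val_inj. Qed.

Lemma lift23E g : lift23 g = g \mPo [tuple 'X_(widen3 j) | j < 2].
Proof.
rewrite /lift23 /comp_mpoly /mmap; apply: eq_bigr => m _; congr (_ * _).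
by apply: mmap1_eq => j; rewrite tnth_mktuple.
Qed.

Lemma meval_lift23 g u v w : (lift23 g).@[pt3 u v w] = g.@[pt2 u v].
Proof.
rewrite lift23E comp_mpoly_meval; apply: meval_eq => j.
by rewrite tnth_mktuple mevalXU; case: j => [[|[|]] ?].
Qed.

Lemma lift23_is_linear : linear (@lift23 R).
Proof. by move=> c f g; rewrite !lift23E linearP. Qed.

HB.instance Definition _ :=
  GRing.isLinear.Build R {mpoly R[2]} {mpoly R[3]} _ (@lift23 R)
    lift23_is_linear.

Lemma lift23X (m : 'X_{1..2}) :
  @lift23 R 'X_[m] = 'X_iu ^+ m ix * 'X_iv ^+ m iy.
Proof.
rewrite lift23E comp_mpolyX !big_ord_recl big_ord0 mulr1 !tnth_mktuple.
by congr ('X_ _ ^+ m _ * 'X_ _ ^+ m _); apply: val_inj.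
Qed.

Lemma mderiv_lift23X (m : 'X_{1..2}) (a : 'I_2) :
  (@lift23 R 'X_[m])^`M(widen3 a) = lift23 'X_[m]^`M(a).
Proof.
rewrite mderivX linearZ /= !lift23X mderivM !mderivXn !mnmBE !mnm1E.
case: (ord2P a) => -> /=.
- by rewrite mul0n scale0r mulr0 addr0 mul1n subn0 subn1 scalerAl.
- by rewrite mul0n scale0r mul0r add0r mul1n subn0 subn1 scalerAr.
Qed.

Lemma mderiv_lift23 g (a : 'I_2) : (lift23 g)^`M(widen3 a) = lift23 g^`M(a).
Proof.
rewrite (mpolyE g) (raddf_sum (@lift23 R)) (raddf_sum (mderiv a)).
rewrite (raddf_sum (@lift23 R)) (raddf_sum (mderiv (widen3 a))).
apply: eq_bigr => m _.
by rewrite /= !linearZ /= mderiv_lift23X.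
Qed.

Lemma mderiv_Xw_lift23 (k : nat) g (a : 'I_2) :
  ('X_iw ^+ k * lift23 g)^`M(widen3 a) = 'X_iw ^+ k * lift23 g^`M(a).
Proof.
rewrite mderivM mderivXn mderiv_lift23.
have -> : (widen3 a == iw) = false by case: (ord2P a) => ->.
by rewrite mul0n scale0r mul0r add0r.
Qed.

Lemma d2_homogF (n : nat) f (a b : 'I_2) :
  d2 (homogF n f) (widen3 a) (widen3 b)
  = \sum_(i < n.+1) 'X_iw ^+ (n - i) * lift23 (d2 (hcomp f i) a b).
Proof.
rewrite /d2 /homogF (raddf_sum (mderiv (widen3 b))).
rewrite (raddf_sum (mderiv (widen3 a))).
by apply: eq_bigr => i _; rewrite /= !mderiv_Xw_lift23.
Qed.

Lemma meval_d2_homogF (n : nat) f (a b : 'I_2) u v w :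
  w != 0 -> (msize f <= n.+1)%N ->
  (d2 (homogF n f) (widen3 a) (widen3 b)).@[pt3 u v w]
  = w ^+ n / w ^+ 2 * (d2 f a b).@[pt2 (u / w) (v / w)].
Proof.
move=> wn0 hf; have w2n0 : w ^+ 2 != 0 by rewrite expf_neq0.
have pt2E : pt2 u v =1 (fun j => w * pt2 (u / w) (v / w) j).
  by case=> [[|[|//]] ?] /=; rewrite mulrC divfK.
apply: (mulfI w2n0); rewrite [RHS]mulrA [_ * (_ / _)]mulrC divfK //.
rewrite d2_homogF [in RHS](pihomog_partitionE hf) /d2.
rewrite (raddf_sum (mderiv b)) (raddf_sum (mderiv a)) !raddf_sum !mulr_sumr /=.
apply: eq_bigr => i _.
rewrite mevalM rmorphXn /= mevalXU meval_lift23 (meval_eq _ pt2E) mulrCA.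
rewrite -/(d2 _ a b) (meval_d2_scale_dhomog _ _ _ _ (pihomogP _ i f)).
by rewrite mulrA -exprD subnK // -ltnS.
Qed.
End PlaneToSpace.

Section FormQ.
Variable R : realFieldType.
Implicit Types (f : {mpoly R[2]}) (u v w : R).

Lemma Qat_pullbackII (n : nat) f u v w : w != 0 -> (msize f <= n.+1)%N ->
  Qat n f u v w = w ^+ (n + 2) *: pullbackII f u v w.
Proof.
move=> wn0 hf.
have := meval_d2_homogF ix ix u v wn0 hf; rewrite widen3_ix => Fuu.
have := meval_d2_homogF ix iy u v wn0 hf; rewrite widen3_ix widen3_iy => Fuv.
have := meval_d2_homogF iy iy u v wn0 hf; rewrite widen3_iy => Fvv.
have fyx : d2 f iy ix = d2 f ix iy by rewrite /d2 mderiv_comm.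
apply/matrixP => i j.
case: (ord3P i) => ->; case: (ord3P j) => ->;
  rewrite /pullbackII /Qat /IImx /Jrho !(mxE, big_ord2_xy, big_ord3_uvw) /= fyx
    ?(mevalM, mevalD, mevalB, mevalN, rmorphXn, rmorph_nat) /= ?mevalXU
    ?Fuu ?Fuv ?Fvv /=;
  by rewrite /pt3 /= exprD; field; rewrite ?expf_neq0.
Qed.

Lemma bformZ (k : nat) (c : R) (M : 'M[R]_k) (xi eta : 'cV[R]_k) :
  bform (c *: M) xi eta = c * bform M xi eta.
Proof. by rewrite /bform -scalemxAr -scalemxAl mxE. Qed.

Lemma bform_pullback (k l : nat) (J : 'M[R]_(k, l)) (M : 'M[R]_k)
    (xi eta : 'cV[R]_l) :
  bform (J^T *m M *m J) xi eta = bform M (J *m xi) (J *m eta).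
Proof. by rewrite /bform trmx_mul !mulmxA. Qed.

Lemma tangentS2_equator u v : tangentS2 u v 0 (equator_tangent u v).
Proof. by rewrite /tangentS2 !mxE /=; ring. Qed.

Lemma Qat_equator_tangent (n : nat) f u v :
  bform (Qat n f u v 0) (equator_tangent u v) (equator_tangent u v) = 0.
Proof.
rewrite /bform /Qat /equator_tangent !(mxE, big_ord3_uvw) /=.
rewrite ?(mevalM, mevalD, mevalB, mevalN, rmorphXn) /= ?mevalXU /pt3 /=.
by ring.
Qed.
End FormQ.

Theorem proposition1 (R : realFieldType) (f : {mpoly R[2]}) (n : nat)
    (hdeg : msize f = n.+1) :
  (* Q = omega^(n+2) rho^*(II_f) on {omega <> 0} *)
  (forall u v w : R, w != 0 ->
      Qat n f u v w = w ^+ (n + 2) *: pullbackII f u v w)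
  /\
  (* on the open hemispheres, Q restricted to S^2 is a nonvanishing multiple
     of the form induced from II_f by the Poincare projections *)
  (exists c : R -> R -> R -> R,
      forall u v w : R, onS2 u v w -> w != 0 ->
        c u v w != 0 /\
        forall xi eta : 'cV[R]_3,
          tangentS2 u v w xi -> tangentS2 u v w eta ->
          bform (Qat n f u v w) xi eta
          = c u v w * bform (IImx f (rho u v w).1 (rho u v w).2)
                            (Jrho u v w *m xi) (Jrho u v w *m eta))
  /\
  (* the equator is an integral curve of the fields of lines of Q on S^2 *)
  (forall u v : R, onS2 u v 0 ->
      tangentS2 u v 0 (equator_tangent u v) /\
      bform (Qat n f u v 0) (equator_tangent u v) (equator_tangent u v) = 0).
Proof.
have hf : (msize f <= n.+1)%N by rewrite hdeg.
split; [|split].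
- by move=> u v w wn0; apply: Qat_pullbackII.
- exists (fun _ _ w => w ^+ (n + 2)) => u v w _ wn0; split; first exact: expf_neq0.
  by move=> xi eta _ _; rewrite Qat_pullbackII // bformZ bform_pullback.
- by move=> u v _; split; [apply: tangentS2_equator | apply: Qat_equator_tangent].
Qed.
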